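(* In the standing setting, for every $A'\in Q'$ we have $g'(A')=\bigcup_{a'\in A'}\downarrow f^{-1}(a')$, where $\downarrow f^{-1}(a')=\{b\in P:\ \exists a\in f^{-1}(a') \text{ with } b\preceq a\}$.
   Context: Standing setting: $(P,\preceq)$ is a finite poset with a bottom and a top element; $f:P\to P'$ is a surjective map onto $P'=f(P)$; $f^{-1}(a')=\{a\in P: f(a)=a'\}$; the relation $\preceq'$ on $P'$ is defined by $b'\preceq' a'$ iff there exist $a\in f^{-1}(a')$, $b\in f^{-1}(b')$ with $b\preceq a$. Assume the three conditions: (D) for all $a',b'\in P'$ with $b'\preceq' a'$ and every $a\in f^{-1}(a')$ there is $b\in f^{-1}(b')$ with $b\preceq a$; (U) for all $a',b'\in P'$ with $b'\preceq' a'$ and every $b\in f^{-1}(b')$ there is $a\in f^{-1}(a')$ with $b\preceq a$; (S) for all $a,b,c\in P$, if $c\preceq b\preceq a$ and $f(c)=f(a)$ then $f(b)=f(a)$. (Then $(P',\preceq')$ is a poset.) A down-set of a poset is a subset $A$ such that $a\in A$ and $b\preceq a$ imply $b\in A$. $Q$ is the set of nonempty down-sets of $(P,\preceq)$ and $Q'$ the set of nonempty down-sets of $(P',\preceq')$, each ordered by inclusion. $g:2^P\to 2^{P'}$ is $g(A)=\{f(a):a\in A\}$. For $A'\in Q'$, $g^{-1}(A')=\{A\in Q: g(A)=A'\}$ and $g'(A')=\bigcup_{A\in g^{-1}(A')}A$. *)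

From mathcomp Require Import all_boot.
Set Implicit Arguments. Unset Strict Implicit. Unset Printing Implicit Defensive.

Definition is_poset (T : finType) (le : rel T) : Prop :=
  [/\ reflexive le, antisymmetric le & transitive le].

Definition has_bottom (T : finType) (le : rel T) : Prop :=
  exists b : T, forall x, le b x.
Definition has_top (T : finType) (le : rel T) : Prop :=
  exists t : T, forall x, le x t.

Definition fiber (P P' : finType) (f : P -> P') (a' : P') : {set P} :=
  [set a | f a == a'].

Definition induced_le (P P' : finType) (le : rel P) (f : P -> P') : rel P' :=
  fun b' a' => [exists a in fiber f a', exists b in fiber f b', le b a].

Definition cond_D (P P' : finType) (le : rel P) (f : P -> P') : Prop :=
  forall a' b', induced_le le f b' a' ->
    forall a, a \in fiber f a' -> exists2 b, b \in fiber f b' & le b a.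
Definition cond_U (P P' : finType) (le : rel P) (f : P -> P') : Prop :=
  forall a' b', induced_le le f b' a' ->
    forall b, b \in fiber f b' -> exists2 a, a \in fiber f a' & le b a.
Definition cond_S (P P' : finType) (le : rel P) (f : P -> P') : Prop :=
  forall a b c, le c b -> le b a -> f c = f a -> f b = f a.

Definition downset (T : finType) (le : rel T) (A : {set T}) : bool :=
  [forall a in A, forall b, le b a ==> (b \in A)].

Definition in_Q (T : finType) (le : rel T) (A : {set T}) : bool :=
  (A != set0) && downset le A.

Definition gmap (P P' : finType) (f : P -> P') (A : {set P}) : {set P'} := f @: A.

Definition gprime (P P' : finType) (le : rel P) (f : P -> P') (A' : {set P'})
  : {set P} :=
  \bigcup_(A : {set P} | in_Q le A && (gmap f A == A')) A.

Definition down (T : finType) (le : rel T) (S : {set T}) : {set T} :=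
  [set b | [exists a in S, le b a]].

From mathcomp Require Import all_boot.

(* Write R(A') for the union of the down-closures of the fibres
   over A', i.e. the set of b lying below some a with f a in A'.  We show that
   R(A') is the LARGEST member of g^{-1}(A'); the union of a family having a
   largest member is that member, so g'(A') = R(A').
   - Every down-set A with g(A) = A' lies in R(A'): each b in A is below
     itself and f b is in A' (reflexivity).
   - R(A') is a down-set (transitivity), it is nonempty and maps onto A'
     (surjectivity and reflexivity), and it maps into A' because A' is a
     down-set of the induced order: b <= a with f a in A' gives f b <=' f a. *)

Lemma bigcup_largest (T : finType) (p : pred {set T}) (M : {set T}) :
  p M -> (forall A, p A -> A \subset M) -> \bigcup_(A | p A) A = M.
Proof.
move=> pM maxM; apply/eqP; rewrite eqEsubset bigcup_sup // andbT.
by apply/bigcupsP.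
Qed.

Section DownFibres.

Variables (P P' : finType) (le : rel P) (f : P -> P').

Definition down_fibres (A' : {set P'}) : {set P} :=
  \bigcup_(a' in A') down le (fiber f a').

Lemma down_fibresP (A' : {set P'}) (b : P) :
  reflect (exists2 a, f a \in A' & le b a) (b \in down_fibres A').
Proof.
apply: (iffP bigcupP).
  move=> [a' a'A']; rewrite inE => /existsP[a /andP[]].
  by rewrite inE => /eqP fa leba; exists a; rewrite // fa.
move=> [a faA' leba]; exists (f a) => //; rewrite inE.
by apply/existsP; exists a; rewrite inE eqxx.
Qed.

Hypothesis le_refl : reflexive le.

Lemma sub_down_fibres_gmap (A : {set P}) : A \subset down_fibres (gmap f A).
Proof.
by apply/subsetP => b bA; apply/down_fibresP; exists b; rewrite ?imset_f.
Qed.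

Hypothesis f_surj : forall a' : P', exists a : P, f a = a'.

Lemma down_fibres_neq0 (A' : {set P'}) : A' != set0 -> down_fibres A' != set0.
Proof.
case/set0Pn=> a' a'A'; have [a fa] := f_surj a'.
by apply/set0Pn; exists a; apply/down_fibresP; exists a; rewrite ?fa.
Qed.

Lemma gmap_down_fibres (A' : {set P'}) :
  downset (induced_le le f) A' -> gmap f (down_fibres A') = A'.
Proof.
move=> /forallP dA'; apply/setP => a'; apply/imsetP/idP.
  move=> [b /down_fibresP[a faA' leba] ->].
  have /implyP := forallP (implyP (dA' (f a)) faA') (f b); apply.
  apply/existsP; exists a; rewrite inE eqxx /=.
  by apply/existsP; exists b; rewrite inE eqxx.
move=> a'A'; have [a fa] := f_surj a'; exists a => //.
by apply/down_fibresP; exists a; rewrite ?fa.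
Qed.

Hypothesis le_trans : transitive le.

Lemma down_fibres_downset (A' : {set P'}) : downset le (down_fibres A').
Proof.
apply/forallP => c; apply/implyP => /down_fibresP[a faA' leca].
apply/forallP => d; apply/implyP => ledc; apply/down_fibresP.
by exists a => //; apply: le_trans leca.
Qed.

End DownFibres.

Theorem lemma14 (P P' : finType) (le : rel P) (f : P -> P') :
  is_poset le -> has_bottom le -> has_top le ->
  (forall a' : P', exists a : P, f a = a') ->
  cond_D le f -> cond_U le f -> cond_S le f ->
  forall A' : {set P'}, in_Q (induced_le le f) A' ->
    gprime le f A' = \bigcup_(a' in A') down le (fiber f a').
Proof.
move=> [le_refl _ le_trans] _ _ f_surj _ _ _ A' /andP[A'_neq0 A'_down].
apply: bigcup_largest => [|A /andP[_ /eqP <-]].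
  rewrite /in_Q gmap_down_fibres // eqxx andbT.
  by rewrite down_fibres_neq0 // down_fibres_downset.
exact: sub_down_fibres_gmap.
Qed.
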